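(* Let $m=2$ and $1\le k\le n-1$. If $|L|\ge 2^{n-1-k}$, then the class $\mathcal{C}^k_{ac}$ of all complete acyclic $k$-bounded binary CP-nets over $n$ variables is not learnable with membership queries to a limited oracle and not learnable with membership queries to a malicious oracle.
   Context: Variables $V=\{v_1,\dots,v_n\}$ with binary domains. An outcome assigns a value to every variable. A complete CP-net gives each $v_i$ a parent set $Pa(v_i)\subseteq V\setminus\{v_i\}$ and, for each assignment to $Pa(v_i)$, a strict order on $D_{v_i}$; parents are non-dummy. Acyclic: parent graph (edges $(v_j,v_i)$, $v_j\in Pa(v_i)$) is acyclic; $k$-bounded: all $|Pa(v_i)|\le k$. Improving flip: changing only $v_i$ to the value preferred under the order for context $o[Pa(v_i)]$; $o'\succ o$ iff a nonempty sequence of improving flips leads from $o$ to $o'$. A swap is an ordered pair $x=(x.1,x.2)$ of outcomes differing in exactly one variable; $\mathcal{X}_{swap}$ contains exactly one ordering of each such pair (fixed arbitrarily); the target concept is $c^*(x)=1$ iff $x.1\succ x.2$ under the target. A set $L\subseteq\mathcal{X}_{swap}$ is chosen in advance by an adversary. A limited oracle answers a membership query $x$ with $c^*(x)$ if $x\notin L$ and with ''I don't know'' if $x\in L$; a malicious oracle answers $c^*(x)$ if $x\notin L$ and $1-c^*(x)$ if $x\in L$; both are persistent. A class is learnable with membership queries to a limited (malicious) oracle if some algorithm exactly identifies every target concept in the class by asking such an oracle a number of queries polynomial in $n$, the target's size and $|L|$. *)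

From mathcomp Require Import all_boot.
Set Implicit Arguments. Unset Strict Implicit. Unset Printing Implicit Defensive.

Definition outcome (n : nat) : finType := {ffun 'I_n -> bool}.
Definition pair (n : nat) : finType := (outcome n * outcome n)%type.

(** A complete binary CP-net: parent sets and, for every variable i, the value of
    D_{v_i} that is preferred in the context given by an outcome.  The preference
    is required (in [cpnet_wf]) to depend only on the values of the parents, so
    [pref i] encodes a strict order on {false,true} for each parent assignment. *)
Record cpnet (n : nat) := CPNet {
  Pa : 'I_n -> {set 'I_n};
  pref : 'I_n -> outcome n -> bool
}.

Definition cpnet_wf n (N : cpnet n) : Prop :=
  (forall i, i \notin Pa N i) /\
  (forall i (o o' : outcome n), (forall j, j \in Pa N i -> o j = o' j) ->
      pref N i o = pref N i o') /\
  (forall i j, j \in Pa N i -> exists o o' : outcome n,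
      (forall l, l != j -> o l = o' l) /\ pref N i o <> pref N i o').

Definition parent_rel n (N : cpnet n) : rel 'I_n := fun a b => a \in Pa N b.

Definition acyclic n (N : cpnet n) : Prop :=
  forall i j, j \in Pa N i -> ~~ connect (parent_rel N) i j.

Definition k_bounded n (k : nat) (N : cpnet n) : Prop :=
  forall i, #|Pa N i| <= k.

Definition in_class n k (N : cpnet n) : Prop :=
  cpnet_wf N /\ acyclic N /\ k_bounded k N.

Definition improving n (N : cpnet n) : rel (outcome n) := fun o o' =>
  [exists i, (o i != pref N i o) &&
             (o' == [ffun j => if j == i then pref N i o else o j])].

Definition dominates n (N : cpnet n) (a b : outcome n) : bool :=
  [exists c, improving N b c && connect (improving N) c a].

Definition concept n (N : cpnet n) (x : pair n) : bool := dominates N x.1 x.2.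

Definition is_swap n (x : pair n) : bool :=
  #|[set i | x.1 i != x.2 i]| == 1.

Definition swap_space n (X : {set pair n}) : Prop :=
  (forall x, x \in X -> is_swap x) /\
  (forall a b : outcome n, is_swap (a, b) -> ((a, b) \in X) != ((b, a) \in X)).

Definition hyp n := pair n -> bool.

(** A deterministic adaptive learner with answers of type Ans: given the history
    of (query, answer) pairs, it either asks a membership query or outputs a
    hypothesis. *)
Definition learner n (Ans : Type) := seq (pair n * Ans) -> pair n + hyp n.

Fixpoint run n (Ans : Type) (A : learner n Ans) (orc : pair n -> Ans)
    (fuel : nat) (hist : seq (pair n * Ans)) : option (hyp n) :=
  match A hist with
  | inr h => Some h
  | inl x => match fuel with
             | 0 => None
             | f.+1 => run A orc f (rcons hist (x, orc x))
             end
  end.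

(** limited oracle: None = "I don't know"; queries outside X_swap get an
    uninformative answer *)
Definition limited_oracle n (X L : {set pair n}) (N : cpnet n) (x : pair n)
  : option bool :=
  if x \notin X then None else if x \in L then None else Some (concept N x).

Definition malicious_oracle n (X L : {set pair n}) (N : cpnet n) (x : pair n)
  : bool :=
  if x \notin X then false else if x \in L then ~~ concept N x else concept N x.

Definition identifies n (X : {set pair n}) (N : cpnet n) (r : option (hyp n)) :=
  exists h, r = Some h /\ forall x, x \in X -> h x = concept N x.

(** Since n, k, s are fixed, a query bound
    polynomial in n, the target size and |L| is just some number b. *)
Definition learnable_limited n k (X : {set pair n}) (s : nat) : Prop :=
  exists (A : learner n (option bool)) (b : nat),
    forall N : cpnet n, in_class k N ->
    forall L : {set pair n}, L \subset X -> #|L| <= s ->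
      identifies X N (run A (limited_oracle X L N) b [::]).

Definition learnable_malicious n k (X : {set pair n}) (s : nat) : Prop :=
  exists (A : learner n bool) (b : nat),
    forall N : cpnet n, in_class k N ->
    forall L : {set pair n}, L \subset X -> #|L| <= s ->
      identifies X N (run A (malicious_oracle X L N) b [::]).

From mathcomp Require Import all_boot zify.
Set Implicit Arguments. Unset Strict Implicit. Unset Printing Implicit Defensive.

(* Both targets give parents only to one variable v_r: in [and_net] v_r prefers
   true iff its k parents (the set A) are all true, in [false_net] v_r always
   prefers false, and every other variable prefers true.  Each net has a
   potential that strictly increases along improving flips, so a swap is a
   dominance exactly when it is an improving flip; hence the two concepts differ
   precisely on the swaps of v_r in contexts that are all-true on A, and there
   are at most 2^(n-1-k) of them in X_swap.  Taking L to be this set, the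
   limited oracle answers identically for both targets, and the malicious
   oracle for [and_net] coincides with the one for [false_net] and L = set0.
   A deterministic learner thus outputs the same hypothesis for two different
   concepts. *)

Section Learners.
Variables (n : nat) (X : {set pair n}).

Lemma run_ext Ans (A : learner n Ans) (o1 o2 : pair n -> Ans) fuel hist :
  o1 =1 o2 -> run A o1 fuel hist = run A o2 fuel hist.
Proof.
move=> o12; elim: fuel hist => [|fuel IH] hist /=; case: (A hist) => // x.
by rewrite o12 IH.
Qed.

Lemma identifies_unique (N1 N2 : cpnet n) r :
  identifies X N1 r -> identifies X N2 r -> {in X, concept N1 =1 concept N2}.
Proof. by move=> [h [-> h1]] [_ [[<-] h2]] x xX; rewrite -h1 // h2. Qed.

Definition disagree (N1 N2 : cpnet n) : {set pair n} :=
  [set x in X | concept N1 x != concept N2 x].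

Variables N1 N2 : cpnet n.

Lemma limited_oracle_disagree :
  limited_oracle X (disagree N1 N2) N1 =1 limited_oracle X (disagree N1 N2) N2.
Proof.
move=> x; rewrite /limited_oracle inE.
(* generalizing the concepts keeps conversion from unfolding [dominates] *)
by case: (x \in X) (concept N1 x) (concept N2 x) => [] [] [].
Qed.

Lemma malicious_oracle_disagree :
  malicious_oracle X (disagree N1 N2) N1 =1 malicious_oracle X set0 N2.
Proof.
move=> x; rewrite /malicious_oracle !inE.
by case: (x \in X) (concept N1 x) (concept N2 x) => [] [] [].
Qed.

Lemma disagree_not_learnable k s :
  in_class k N1 -> in_class k N2 ->
  #|disagree N1 N2| <= s -> disagree N1 N2 != set0 ->
  ~ learnable_limited k X s /\ ~ learnable_malicious k X s.
Proof.
move=> N1k N2k Ds /set0Pn [x0]; rewrite inE => /andP [x0X x0D].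
have indistinguishable r : identifies X N1 r -> identifies X N2 r -> False.
  by move=> r1 r2; rewrite (identifies_unique r1 r2) ?eqxx in x0D.
have DX : disagree N1 N2 \subset X by apply/subsetP => x; rewrite inE => /andP [].
split=> -[alg [b learns]]; apply: (indistinguishable _ (learns _ N1k _ DX Ds)).
- by rewrite (run_ext _ _ _ limited_oracle_disagree); apply: learns.
- rewrite (run_ext _ _ _ malicious_oracle_disagree).
  by apply: learns; rewrite ?sub0set ?cards0.
Qed.

End Learners.

Section Outcomes.
Variable n : nat.
Implicit Types (o : outcome n) (i j : 'I_n) (b : bool).

Definition upd o i b : outcome n := [ffun j => if j == i then b else o j].

Lemma upd_at o i b : upd o i b i = b.
Proof. by rewrite ffunE eqxx. Qed.

Lemma upd_off o i b j : j != i -> upd o i b j = o j.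
Proof. by rewrite ffunE => /negbTE ->. Qed.

Lemma upd_id o i : upd o i (o i) = o.
Proof. by apply/ffunP => j; rewrite ffunE; case: eqP => [->|]. Qed.

Lemma upd_upd o i b b' : upd (upd o i b) i b' = upd o i b'.
Proof. by apply/ffunP => j; rewrite !ffunE; case: eqP. Qed.

Lemma is_swap_flip o i : is_swap (upd o i (~~ o i), o).
Proof.
apply/cards1P; exists i; apply/setP => j; rewrite !inE /= ffunE.
by case: (eqVneq j i) => [->|_]; rewrite ?eqxx //; case: (o i).
Qed.

Lemma is_swapP (x : pair n) : is_swap x -> exists i, x.1 = upd x.2 i (~~ x.2 i).
Proof.
case: x => a c /cards1P [i /setP Di]; exists i; apply/ffunP => j.
have := Di j; rewrite !inE ffunE /=.
by case: (eqVneq j i) => [->|_ /negbFE /eqP //]; case: (a i); case: (c i).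
Qed.

Lemma card_outcomes_fixed (S : {set 'I_n}) (f : 'I_n -> bool) :
  #|[set o : outcome n | [forall j in S, o j == f j]]| = 2 ^ (n - #|S|).
Proof.
pose xorf o : outcome n := [ffun j => o j (+) f j].
have xorfK : involutive xorf by move=> o; apply/ffunP => j; rewrite !ffunE addbK.
have -> : [set o : outcome n | [forall j in S, o j == f j]] =
          xorf @^-1: [set d | d \in pffun_on false (~: S) predT].
  apply/setP => o; rewrite !inE; apply/forall_inP/pffun_onP => [fixed | [supp _] j jS].
    split=> [|_ _ //]; apply/subsetP => j; rewrite !inE ffunE.
    by apply: contraNN => jS; rewrite (eqP (fixed j jS)) addbb.
  apply: contraTT jS => ocj; have: j \in false.-support (xorf o).
    by rewrite inE ffunE; move: ocj; case: (o j); case: (f j).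
  by move/(subsetP supp); rewrite inE.
rewrite card_preimset ?cardsE ?card_pffun_on; last exact: inv_inj.
by rewrite card_bool [#|~: S|]cardsCs setCK card_ord.
Qed.

End Outcomes.

Section Swaps.
Variable n : nat.
Implicit Types (o c : outcome n) (i : 'I_n).

Definition orient (X : {set pair n}) o c : pair n :=
  if (o, c) \in X then (o, c) else (c, o).

Variable X : {set pair n}.
Hypothesis Xswap : swap_space X.

Lemma orient_eq (x : pair n) o c :
  x \in X -> x = (o, c) \/ x = (c, o) -> orient X o c = x.
Proof.
rewrite /orient => xX [xoc|xco]; subst x; first by rewrite xX.
by have := Xswap.2 _ _ (Xswap.1 _ xX); rewrite xX; case: ifP.
Qed.

Lemma flip_oriented o i : exists v, (upd o i (~~ v), upd o i v) \in X.
Proof.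
have := Xswap.2 _ _ (is_swap_flip (upd o i false) i); rewrite upd_upd upd_at.
case: (_ \in X) / idP => [flipX _ | _ /negPn flipX];
  by [exists false | exists true].
Qed.

End Swaps.

Section Dominance.
Variables (n : nat) (N : cpnet n).
Hypothesis Nwf : cpnet_wf N.
Implicit Types (o a b : outcome n) (i : 'I_n).

Lemma pref_upd i o (v : bool) : pref N i (upd o i v) = pref N i o.
Proof.
case: Nwf => noself [local _]; apply: local => j jPa.
by rewrite upd_off //; apply: contraTneq jPa => ->; exact: noself.
Qed.

Lemma improving_flip o i : o i != pref N i o -> improving N o (upd o i (~~ o i)).
Proof.
move=> oi; apply/existsP; exists i; rewrite oi /=.
have -> : pref N i o = ~~ o i by move: oi; case: (o i); case: (pref N i o).
exact: eqxx.
Qed.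

Lemma improvingP o o' :
  improving N o o' -> exists2 i, o i != pref N i o & o' = upd o i (pref N i o).
Proof. by case/existsP => i /andP [oi /eqP ->]; exists i. Qed.

Variable phi : outcome n -> nat.
Hypothesis phi_improving : forall o o', improving N o o' -> phi o < phi o'.

Lemma dominates_potential a b : dominates N a b -> phi b < phi a.
Proof.
case/existsP => c /andP [/phi_improving bc /connectP [p]].
elim: p c bc => [|d p IH] c bc /= => [_ ->|/andP [/phi_improving cd pd]] //.
exact: IH (ltn_trans bc cd) pd.
Qed.

Lemma dominates_flip b i : dominates N (upd b i (~~ b i)) b = (b i != pref N i b).
Proof.
set a := upd b i (~~ b i); have [bi|/negPn/eqP bi] := boolP (b i != pref N i b).
  by apply/existsP; exists a; rewrite connect0 andbT improving_flip.
have aK : upd a i (~~ a i) = b by rewrite upd_upd upd_at negbK upd_id.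
have /phi_improving ab : improving N a b.
  by rewrite -aK improving_flip // pref_upd upd_at -bi; case: (b i).
by apply/negbTE/negP => /dominates_potential; rewrite ltnNge ltnW.
Qed.

End Dominance.

Section RootNet.
Variables (n : nat) (r : 'I_n) (P : {set 'I_n}) (g : outcome n -> bool).
Implicit Types (o : outcome n) (i j : 'I_n).

Definition root_net : cpnet n :=
  CPNet (fun i => if i == r then P else set0)
        (fun i o => if i == r then g o else true).

Hypothesis rP : r \notin P.
Hypothesis g_local : forall o o', (forall j, j \in P -> o j = o' j) -> g o = g o'.

Lemma g_upd_root o v : g (upd o r v) = g o.
Proof. by apply: g_local => j jP; rewrite upd_off //; apply: contraTneq jP => ->. Qed.

(* Flipping another variable to true gains 2 in the count and loses at most 1
   in the last summand; flipping v_r leaves its context unchanged (r \notin P)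
   and makes it preferred. *)
Definition root_potential o := 2 * #|[set j | (j != r) && o j]| + (o r == g o).

Lemma root_potential_improving o o' :
  improving root_net o o' -> root_potential o < root_potential o'.
Proof.
case/improvingP => i + ->; rewrite /root_potential /=.
case: (eqVneq i r) => [-> | ir] oi.
  have -> : [set j | (j != r) && upd o r (g o) j] = [set j | (j != r) && o j].
    by apply/setP => j; rewrite !inE; case: (eqVneq j r) => // /upd_off ->.
  by rewrite g_upd_root upd_at eqxx (negbTE oi) addn0 addn1.
have oi0 : o i = false by move: oi; case: (o i).
have -> : [set j | (j != r) && upd o i true j] = i |: [set j | (j != r) && o j].
  apply/setP => j; rewrite !inE; case: (eqVneq j i) => [->|/upd_off ->] //.
  by rewrite upd_at ir.
rewrite cardsU1 inE ir oi0 /=.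
by case: (o r == g o); case: (_ r == g _); lia.
Qed.

Lemma root_net_in_class k :
  (forall j, j \in P -> exists o o',
     (forall l, l != j -> o l = o' l) /\ g o <> g o') ->
  #|P| <= k -> in_class k root_net.
Proof.
move=> g_nondummy Pk; split; [split; [|split]|split].
- by move=> i /=; case: eqP => [->|]; rewrite ?inE.
- by move=> i o o' /=; case: eqP => // _; apply: g_local.
- by move=> i j /=; case: eqP => [_ /g_nondummy|]; rewrite ?inE.
- move=> i j /=; case: eqP => [-> jP|]; last by rewrite inE.
  apply/negP => /connectP [[|y p] /=]; first by move=> _ jr; move: rP; rewrite -jr jP.
  by rewrite /parent_rel /=; case: eqP => [->|_]; rewrite ?inE ?(negbTE rP).
- by move=> i /=; case: eqP => // _; rewrite cards0.
Qed.

End RootNet.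

Section AndNet.
Variables (n : nat) (r : 'I_n) (A : {set 'I_n}).
Hypothesis rA : r \notin A.
Implicit Types (o b : outcome n) (i j : 'I_n).

Definition all_true_on o := [forall j in A, o j].

Lemma all_true_on_local o o' :
  (forall j, j \in A -> o j = o' j) -> all_true_on o = all_true_on o'.
Proof.
by move=> oo'; apply: eq_forallb => j; case: (boolP (j \in A)) => // /oo' ->.
Qed.

Definition and_net := root_net r A all_true_on.
Definition false_net := root_net r set0 (fun _ => false).

Lemma and_net_in_class k : #|A| <= k -> in_class k and_net.
Proof.
apply: root_net_in_class => // [|j jA]; first exact: all_true_on_local.
exists [ffun _ => true], (upd [ffun _ => true] j false); split.
  by move=> l /upd_off ->.
have -> : all_true_on [ffun _ => true] by apply/forall_inP => l _; rewrite ffunE.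
by move=> /esym /forall_inP /(_ j jA); rewrite upd_at.
Qed.

Lemma false_net_in_class k : in_class k false_net.
Proof. by apply: root_net_in_class => [||j|]; rewrite ?inE ?cards0. Qed.

Lemma disagree_flipE b i :
  (concept and_net (upd b i (~~ b i), b) != concept false_net (upd b i (~~ b i), b))
  = (i == r) && all_true_on b.
Proof.
have [and_wf _] := and_net_in_class (leqnn #|A|).
have [false_wf _] := false_net_in_class 0.
have r_set0 : r \notin set0 by rewrite inE.
have false_local (o o' : outcome n) : {in set0, o =1 o'} -> false = false by [].
have and_potential := root_potential_improving rA all_true_on_local.
rewrite /concept /= (dominates_flip and_wf and_potential).
rewrite (dominates_flip false_wf (root_potential_improving r_set0 false_local)) /=.
by case: (i == r); case: (b i); case: (all_true_on b).
Qed.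

Variable X : {set pair n}.
Hypothesis Xswap : swap_space X.
Local Notation D := (disagree X and_net false_net).

Lemma mem_disagree_flip b v :
  (upd b r (~~ v), upd b r v) \in X ->
  ((upd b r (~~ v), upd b r v) \in D) = all_true_on b.
Proof.
rewrite inE => ->; have := disagree_flipE (upd b r v) r.
by rewrite upd_upd upd_at eqxx (g_upd_root rA all_true_on_local).
Qed.

Lemma disagree_nonempty : D != set0.
Proof.
have [v flipX] := flip_oriented Xswap [ffun _ => true] r.
apply/set0Pn; exists (upd [ffun _ => true] r (~~ v), upd [ffun _ => true] r v).
by rewrite mem_disagree_flip //; apply/forall_inP => j _; rewrite ffunE.
Qed.

Lemma card_disagree : #|D| <= 2 ^ (n - #|A|.+1).
Proof.
pose F := [set c : outcome n | [forall j in r |: A, c j == (j != r)]].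
pose flip_pair c := orient X (upd c r true) (upd c r false).
(* a disagreement swap is determined by its context off v_r, which lies in F *)
have: D \subset flip_pair @: F.
  apply/subsetP => -[a b] abD; have abX : (a, b) \in X by case/setIdP: abD.
  have [i /= aE] := is_swapP (Xswap.1 _ abX); subst a.
  move: abD; rewrite inE abX andTb disagree_flipE => /andP [/eqP ir allb].
  rewrite {}ir in abX *; apply/imsetP; exists (upd b r false).
    rewrite inE; apply/forall_inP => j; rewrite in_setU1 => /predU1P [->|jA].
      by rewrite upd_at eqxx.
    have jr : j != r by apply: contraTneq jA => ->.
    by rewrite upd_off // jr (forall_inP allb).
  symmetry; apply: (orient_eq Xswap abX); rewrite !upd_upd.
  by case: (b r) (upd_id b r) => ->; [right | left].
move/subset_leq_card/leq_trans; apply; apply: leq_trans (leq_imset_card _ _) _.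
by rewrite card_outcomes_fixed cardsU1 rA.
Qed.

End AndNet.

Lemma exists_subset_card (T : finType) (B : {set T}) k :
  k <= #|B| -> exists2 A : {set T}, A \subset B & #|A| = k.
Proof.
case/card_geqP => s [s_uniq s_size sB]; exists [set x in s].
  by apply/subsetP => x; rewrite inE => /sB.
by rewrite cardsE (card_uniqP s_uniq).
Qed.

Theorem proposition1 (n k : nat) (X : {set pair n}) :
  swap_space X -> 1 <= k <= n - 1 ->
  forall s : nat, 2 ^ (n - 1 - k) <= s ->
  ~ learnable_limited k X s /\ ~ learnable_malicious k X s.
Proof.
move=> Xswap /andP [k_gt0 k_le] s s_ge.
have n_gt0 : 0 < n by lia.
pose r := Ordinal n_gt0.
have [A A_sub A_card] : exists2 A : {set 'I_n}, A \subset [set~ r] & #|A| = k.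
  by apply: exists_subset_card; rewrite cardsC1 card_ord; lia.
have rA : r \notin A by apply/negP => /(subsetP A_sub); rewrite !inE eqxx.
apply: (disagree_not_learnable (and_net_in_class rA (eq_leq A_card))
                               (false_net_in_class r k)).
- apply: leq_trans (card_disagree rA Xswap) _.
  by rewrite A_card -[k.+1]add1n subnDA.
- exact: disagree_nonempty.
Qed.
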